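(* Let $\mu,\nu$ be partitions of $n$ with $p(\nu)=p(\mu)+k$, where $k\ge2$. Then \[ \sum_{\substack{\mu_1,\dots,\mu_{k-1}\text{ partitions of }n:\\ p(\mu_i)=p(\mu)+i}} t^\mu_{\mu_1}t^{\mu_1}_{\mu_2}\cdots t^{\mu_{k-1}}_\nu=k!\,t^\mu_\nu. \]
   Context: Let $\mathbb H$ be the upper half plane and $\mathcal O(\mathbb H)$ its ring of holomorphic functions. Let $V=\mathbb C[a_{-1},a_{-2},\dots,b_0,b_{-1},\dots]$ be the vacuum module of the Heisenberg Lie algebra $[a_m,b_n]=\delta_{m,-n}C$ (with $a_m1=0$ for $m\ge0$, $b_n1=0$ for $n>0$, $C=1$), a vertex algebra with fields $a(z)=\sum a_nz^{-n-1}$, $b(z)=\sum b_nz^{-n}$. Let $\mathscr D^{ch}(\mathbb H)=V\otimes_{\mathbb C[b_0]}\mathcal O(\mathbb H)$ ($b_0\mapsto\tau$, $b=b_0$), with $Y(f,z)=\sum_{i\ge0}\frac{f^{(i)}(b)}{i!}(\sum_{n\ne0}b_nz^{-n})^i$ for $f\in\mathcal O(\mathbb H)$. For a partition $\mu=(\mu_{(1)}\ge\dots\ge\mu_{(d)}\ge1)$, $p(\mu)=d$, $|\mu|=\sum\mu_{(i)}$ and $b_{-\mu}=b_{-\mu_{(1)}}\cdots b_{-\mu_{(d)}}$. $SL(2,\mathbb R)$ acts on the right by vertex algebra automorphisms $\pi(g)$, integrating the zero modes of $E=-a_{-1}$, $F=a_{-1}b_0^2+2b_{-1}$, $H=-2a_{-1}b_0$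 via $\pi(e^x)=\exp(-x_{(0)})$; for $g=\begin{pmatrix}\alpha&\beta\\\gamma&\delta\end{pmatrix}$, $\pi(g)a_{-1}=a_{-1}(\gamma b+\delta)^2+2\gamma^2b_{-1}$ and $\pi(g)f(b)=f(\frac{\alpha b+\beta}{\gamma b+\delta})$. For each partition $\mu$ there are unique constants $t^\mu_\nu$ (for partitions $\nu$ with $|\nu|=|\mu|$, $p(\nu)\ge p(\mu)$), independent of $g$, such that for all $g\in SL(2,\mathbb R)$ \[ \pi(g)(b_{-\mu}\cdot1)=\sum_{\nu:\,p(\nu)\ge p(\mu)}t^\mu_\nu(-\gamma)^{p(\nu)-p(\mu)}\,b_{-\nu}\,(\gamma b+\delta)^{-p(\mu)-p(\nu)}. \] *)

From HB Require Import structures.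
From mathcomp Require Import all_boot all_order all_algebra.
From mathcomp Require Import complex.
From mathcomp Require Import reals.
From mathcomp Require Import mpoly.
Set Implicit Arguments. Unset Strict Implicit. Unset Printing Implicit Defensive.
Import Order.TTheory GRing.Theory Num.Theory.
Local Open Scope ring_scope.
Local Open Scope complex_scope.

(* p(mu) = size mu.                                                     *)
Definition is_partition (n : nat) (s : seq nat) : bool :=
  [&& sorted geq s, all (fun k => 0 < k)%N s & sumn s == n].

Fixpoint seqs_len (n l : nat) : seq (seq nat) :=
  if l is l'.+1 then
    flatten [seq [seq x :: s | s <- seqs_len n l'] | x <- iota 1 n]
  else [:: [::]].

Definition partitions (n : nat) : seq (seq nat) :=
  [seq s <- flatten [seq seqs_len n l | l <- iota 0 n.+1] | is_partition n s].

(* Model of the b-sector of D^ch(H) evaluated at a point tau of H.      *)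
(* b_{-k} (k = 1..N) is the polynomial variable 'X_(inord k) of         *)
(* {mpoly R[i][N.+1]} (variable 0 unused); functions f(b) in O(H) are   *)
(* evaluated at b_0 = tau.                                              *)
Section Model.
Variable R : realType.
Local Notation C := R[i].

Definition bvar (N k : nat) : {mpoly C[N.+1]} := 'X_(inord k).

Definition bmon (N : nat) (nu : seq nat) : {mpoly C[N.+1]} :=
  \prod_(k <- nu) bvar N k.

(* sum_{n <> 0} b_n z^{-n} applied to the vacuum = sum_{k >= 1} b_{-k} z^k,
   truncated at k <= N (harmless for the coefficients of z^m, m <= N). *)
Definition bfield (N : nat) : {poly {mpoly C[N.+1]}} :=
  \sum_(1 <= k < N.+1) (bvar N k)%:P * 'X^k.

(* Taylor coefficients f^{(i)}(tau)/i! of the Moebius function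
   f(b) = (a b + bb)/(c b + d), i.e. the unique sequence s with
   (c (tau + w) + d) * sum_i s_i w^i = a (tau + w) + bb  as power series in w. *)
Fixpoint mobius_taylor (a bb c d : R) (tau : C) (i : nat) : C :=
  if i is i'.+1 then
    ((i' == 0%N)%:R * a%:C - c%:C * mobius_taylor a bb c d tau i')
      / (c%:C * tau + d%:C)
  else (a%:C * tau + bb%:C) / (c%:C * tau + d%:C).

(* pi(g)(b_{-m} 1) = coefficient of z^m in
   Y(pi(g) b, z) 1 = sum_i f^{(i)}(b)/i! (sum_{n<>0} b_n z^{-n})^i 1,
   with f(b) = (a b + bb)/(c b + d); only i <= m contribute. *)
Definition pi_b (a bb c d : R) (tau : C) (N m : nat) : {mpoly C[N.+1]} :=
  \sum_(i < m.+1) mobius_taylor a bb c d tau i *: ((bfield N ^+ i)`_m).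

Definition pi_bmon (a bb c d : R) (tau : C) (N : nat) (mu : seq nat)
  : {mpoly C[N.+1]} :=
  \prod_(m <- mu) pi_b a bb c d tau N m.

(* The defining property of the constants t^mu_nu: for every partition mu,
   every g = (a bb; c d) in SL(2,R) and every tau in H,
   pi(g)(b_{-mu} 1) = sum_{nu, p(nu) >= p(mu)} t^mu_nu (-c)^{p(nu)-p(mu)}
                        b_{-nu} (c tau + d)^{-p(mu)-p(nu)}. *)
Definition is_t_family (t : seq nat -> seq nat -> C) : Prop :=
  forall mu : seq nat, is_partition (sumn mu) mu ->
  forall a bb c d : R, a * d - bb * c = 1 ->
  forall tau : C, 0 < complex.Im tau ->
    pi_bmon a bb c d tau (sumn mu) mu =
    \sum_(nu <- partitions (sumn mu) | (size mu <= size nu)%N)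
       (t mu nu * (- c%:C) ^+ (size nu - size mu)
          * (c%:C * tau + d%:C) ^- (size mu + size nu)) *: bmon (sumn mu) nu.

(* chain_sum t n nu j mu = sum over partitions mu_1, ..., mu_j of n with
   p(mu_i) = p(mu) + i of t^mu_{mu_1} t^{mu_1}_{mu_2} ... t^{mu_j}_nu. *)
Fixpoint chain_sum (t : seq nat -> seq nat -> C) (n : nat) (nu : seq nat)
  (j : nat) (mu : seq nat) : C :=
  if j is j'.+1 then
    \sum_(m <- partitions n | size m == (size mu).+1)
       t mu m * chain_sum t n nu j' m
  else t mu nu.

End Model.

(* Take g = (0 -1; 1 d) and tau = i, so that pi(g) acts on b through b |-> -1/(b + d),
   whose Taylor coefficients at tau are f^(j+1)(tau)/(j+1)! = L^-2 y^j with L = tau + d and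
   y = -1/L. Both sides of the identity defining t^mu_nu then become L^(-2 p(mu)) times the
   value at Y = y of a polynomial in Y over C[b_-1, b_-2, ...]: on the left
   F_mu = prod_(m in mu) Q_m with Q_m(Y) = sum_j [z^m] B(z)^(j+1) Y^j, B(z) = sum_k b_-k z^k,
   on the right G_mu = sum_nu t^mu_nu b_-nu Y^(p(nu) - p(mu)). Letting d run over the
   integers gives F_mu = G_mu.
   The substitution b_-m |-> Q_m maps [z^m]B to Q_m and [z^m]B^2 to Q_m', hence, by the
   Leibniz rule, the Y^0 and Y^1 coefficients of F_mu to F_mu and F_mu'. Applied to the
   Y^1 coefficient of G_mu this gives F_mu' = sum_(p(m) = p(mu) + 1) t^mu_m G_m, whose
   coefficient of b_-nu Y^(k-1) reads k t^mu_nu = sum_m t^mu_m t^m_nu. Iterating gives k!. *)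

From HB Require Import structures.
From mathcomp Require Import all_boot all_order all_algebra.
From mathcomp Require Import complex reals mpoly.
From mathcomp Require Import zify ring.
Set Implicit Arguments. Unset Strict Implicit. Unset Printing Implicit Defensive.
Import GRing.Theory Num.Theory.
Local Open Scope ring_scope.

Lemma leq_sumn_mem (s : seq nat) x : x \in s -> (x <= sumn s)%N.
Proof. by elim: s => [|y s IH] //=; rewrite inE => /orP[/eqP -> | /IH]; lia. Qed.

Lemma size_leq_sumn (s : seq nat) : all (fun k => 0 < k)%N s -> (size s <= sumn s)%N.
Proof. by elim: s => [|y s IH] //= /andP[y_gt0 /IH]; lia. Qed.

Lemma partition_leq n nu : is_partition n nu -> all (fun k => k <= n)%N nu.
Proof. by case/and3P => _ _ /eqP <-; apply/allP => x /leq_sumn_mem. Qed.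

Lemma mem_seqs_len n s : all (fun x => 0 < x <= n)%N s -> s \in seqs_len n (size s).
Proof.
elim: s => [|x s IH] /=; first by rewrite inE.
case/andP=> x_range /IH s_in; apply/flatten_mapP; exists x; last exact: map_f.
by rewrite mem_iota; lia.
Qed.

Lemma mem_partitions n nu : (nu \in partitions n) = is_partition n nu.
Proof.
rewrite mem_filter andb_idr // => nu_part; apply/flatten_mapP; exists (size nu).
  case/and3P: nu_part => _ /size_leq_sumn + /eqP sum_nu.
  by rewrite mem_iota sum_nu add0n ltnS.
apply: mem_seqs_len; apply/allP => x x_nu.
case/and3P: nu_part => _ /allP /(_ x x_nu) -> /eqP <-; exact: leq_sumn_mem.
Qed.

Definition bmnm (N : nat) (nu : seq nat) : 'X_{1..N.+1} :=
  (\sum_(k <- nu) U_(inord k))%MM.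

Lemma bmonE (R : realType) N nu : bmon R N nu = 'X_[bmnm N nu].
Proof.
rewrite /bmon /bmnm; elim: nu => [|x nu IH]; first by rewrite !big_nil mpolyX0.
by rewrite !big_cons IH mpolyXD.
Qed.

Lemma bmnmE N nu x : all (fun k => k <= N)%N nu -> (x <= N)%N ->
  bmnm N nu (inord x) = count_mem x nu.
Proof.
move=> nu_le x_le; rewrite /bmnm mnm_sumE -sum1_count [RHS]big_mkcond /=.
rewrite big_seq [RHS]big_seq; apply: eq_bigr => k k_nu.
by rewrite mnm1E -val_eqE /= !inordK // ltnS (allP nu_le).
Qed.

Lemma bmnm_inj N nu nu' :
  sorted geq nu -> sorted geq nu' ->
  all (fun k => k <= N)%N nu -> all (fun k => k <= N)%N nu' ->
  bmnm N nu = bmnm N nu' -> nu = nu'.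
Proof.
move=> nu_sorted nu'_sorted nu_le nu'_le eq_mnm.
apply: (sorted_eq (leT := geq)) => //; first by move=> ? ? ? /=; lia.
  by move=> ? ? /andP[]; lia.
apply/allP => x; rewrite mem_cat => x_in.
have x_le : (x <= N)%N by case/orP: x_in => [/(allP nu_le)|/(allP nu'_le)].
by rewrite /= -(bmnmE nu_le x_le) -(bmnmE nu'_le x_le) eq_mnm.
Qed.

Section Substitution.
Variables (R : realType) (N : nat).
Local Notation P := {mpoly R[i][N.+1]}.

Definition bcoef (i m : nat) : P := (bfield R N ^+ i)`_m.

Lemma bcoef_small i m : (m < i)%N -> bcoef i m = 0.
Proof.
move=> lt_mi; rewrite /bcoef.
have -> : bfield R N = 'X * \sum_(1 <= k < N.+1) (bvar R N k)%:P * 'X^(k.-1).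
  rewrite mulr_sumr; apply: eq_big_nat => k /andP[k_gt0 _].
  by rewrite mulrCA -exprS prednK.
by rewrite exprMn coefXnM lt_mi.
Qed.

Lemma bcoefD i j m : bcoef (i + j) m = \sum_(k < m.+1) bcoef i k * bcoef j (m - k).
Proof. by rewrite /bcoef exprD coefM. Qed.

Lemma bcoef1 m : (0 < m <= N)%N -> bcoef 1 m = bvar R N m.
Proof.
move=> m_range; rewrite /bcoef expr1 /bfield coef_sum (bigD1_seq m) /=; last first.
- exact: iota_uniq.
- by rewrite mem_index_iota ltnS.
rewrite coefCM coefXn eqxx mulr1 big1_seq ?addr0 // => k /andP[k_neq_m _].
by rewrite coefCM coefXn eq_sym (negbTE k_neq_m) mulr0.
Qed.

Definition Qpoly (m : nat) : {poly P} := \poly_(i < m) bcoef i.+1 m.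

Lemma coef_Qpoly m i : (Qpoly m)`_i = bcoef i.+1 m.
Proof. by rewrite coef_poly; case: ltnP => // le_mi; rewrite bcoef_small. Qed.

Definition Fpoly (mu : seq nat) : {poly P} := \prod_(m <- mu) Qpoly m.

Definition substQ : {rmorphism P -> {poly P}} :=
  mmap (polyC \o mpolyC N.+1 (R := R[i])) (fun k : 'I_N.+1 => Qpoly k).

Lemma substQ_bvar k : (k <= N)%N -> substQ (bvar R N k) = Qpoly k.
Proof. by move=> le_kN; rewrite /substQ /= /bvar mmapX mmap1U inordK. Qed.

Lemma substQ_bcoef1 m : (m <= N)%N -> substQ (bcoef 1 m) = Qpoly m.
Proof.
case: m => [_|m le_mN]; last by rewrite bcoef1 ?substQ_bvar.
rewrite bcoef_small // rmorph0; apply/polyP => i.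
by rewrite coef_Qpoly coef0 bcoef_small.
Qed.

(* Both sides have Y^s-coefficient (s+1) [z^m] B^(s+2): split B^(s+2) as B^(l+1) B^(s-l+1)
   for each l <= s. *)
Lemma substQ_bcoef2 m : (m <= N)%N -> substQ (bcoef 2 m) = (Qpoly m)^`().
Proof.
move=> le_mN; rewrite (bcoefD 1 1) rmorph_sum.
rewrite (eq_bigr (fun k : 'I_m.+1 => Qpoly k * Qpoly (m - k))); last first.
  by move=> k _; rewrite rmorphM !substQ_bcoef1 //; have := ltn_ord k; lia.
apply/polyP => s; rewrite coef_sum coef_deriv coef_Qpoly.
under eq_bigr do rewrite coefM.
rewrite exchange_big /= (eq_bigr (fun _ => bcoef s.+2 m)) ?sumr_const ?card_ord //.
move=> l _; have -> : s.+2 = (l.+1 + (s - l).+1)%N by have := ltn_ord l; lia.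
by rewrite bcoefD; apply: eq_bigr => k _; rewrite !coef_Qpoly.
Qed.

Lemma substQ_Fpoly mu : all (fun m => m <= N)%N mu ->
  substQ (Fpoly mu)`_0 = Fpoly mu /\ substQ (Fpoly mu)`_1 = (Fpoly mu)^`().
Proof.
elim: mu => [|m mu IH] /=.
  by rewrite /Fpoly big_nil coefC /= rmorph1 coefC /= rmorph0 derivC.
case/andP=> le_mN /IH [substQ0 substQ1]; rewrite /Fpoly big_cons -/(Fpoly mu).
split; first by rewrite coef0M rmorphM substQ0 coef_Qpoly substQ_bcoef1.
rewrite coefM big_ord_recr big_ord_recr big_ord0 /= add0r.
rewrite rmorphD !rmorphM !coef_Qpoly substQ0 substQ1.
by rewrite substQ_bcoef1 // substQ_bcoef2 // derivM addrC.
Qed.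

Lemma substQ_bmon nu : all (fun m => m <= N)%N nu -> substQ (bmon R N nu) = Fpoly nu.
Proof.
rewrite /bmon /Fpoly rmorph_prod; elim: nu => [|m nu IH] /=; first by rewrite !big_nil.
by case/andP=> le_mN /IH substQ_nu; rewrite !big_cons substQ_nu substQ_bvar.
Qed.

End Substitution.

Lemma poly_eq_inj_eval (A : idomainType) (x : nat -> A) (p q : {poly A}) :
  injective x -> (forall j, p.[x j] = q.[x j]) -> p = q.
Proof.
move=> x_inj eq_pq; apply/eqP; rewrite -subr_eq0; apply: contraT => pq_neq0.
have := max_poly_roots pq_neq0 (rs := [seq x j | j <- iota 0 (size (p - q))]).
rewrite size_map size_iota ltnn map_inj_uniq ?iota_uniq //; apply=> //.
by apply/allP => _ /mapP[j _ ->]; rewrite /root hornerD hornerN eq_pq subrr.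
Qed.

Section Inversion.
Local Open Scope complex_scope.
Variables (R : realType) (N : nat) (d : R) (tau : R[i]).
Local Notation L := (1%:C * tau + d%:C).

Lemma mobius_taylor_inversion j :
  mobius_taylor 0 (-1) 1 d tau j.+1 = L^-1 ^+ 2 * (- L^-1) ^+ j.
Proof.
elim: j => [|j IH]; first by rewrite /= !rmorph0 rmorph1 rmorphN1; ring.
rewrite -[LHS]/((_ - 1%:C * mobius_taylor 0 (-1) 1 d tau j.+1) / L) IH.
rewrite [(- L^-1) ^+ j.+1]exprS; set b := (- L^-1) ^+ j; set a := L^-1.
by rewrite mul0r rmorph1; ring.
Qed.

Lemma pi_b_inversion m : (0 < m)%N ->
  pi_b 0 (-1) 1 d tau N m = L^-1 ^+ 2 *: (Qpoly R N m).[(- L^-1)%:MP].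
Proof.
move=> m_gt0; rewrite /pi_b big_ord_recl expr0 coef1 gtn_eqF // scaler0 add0r.
rewrite horner_poly scaler_sumr; apply: eq_bigr => j _.
rewrite lift0 mobius_taylor_inversion -rmorphXn [bcoef _ _ _ _ * _]mulrC.
by rewrite mul_mpolyC !scalerA.
Qed.

Lemma pi_bmon_inversion mu : all (fun m => 0 < m)%N mu ->
  pi_bmon 0 (-1) 1 d tau N mu =
  L^-1 ^+ 2 ^+ size mu *: (Fpoly R N mu).[(- L^-1)%:MP].
Proof.
rewrite /pi_bmon /Fpoly; elim: mu => [|m mu IH] /=.
  by rewrite !big_nil hornerC scale1r.
case/andP=> m_gt0 /IH pi_mu; rewrite !big_cons pi_mu pi_b_inversion // hornerM.
by rewrite -scalerAl -scalerAr scalerA -exprS.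
Qed.

End Inversion.

Section GeneratingPolynomial.
Local Open Scope complex_scope.
Variables (R : realType) (n : nat) (t : seq nat -> seq nat -> R[i]).

Definition Gpoly (mu : seq nat) : {poly {mpoly R[i][n.+1]}} :=
  \sum_(nu <- partitions n | (size mu <= size nu)%N)
     (t mu nu *: bmon R n nu)%:P * 'X^(size nu - size mu).

Lemma t_expansion_eval (z : R[i]) mu :
  \sum_(nu <- partitions n | (size mu <= size nu)%N)
     (t mu nu * (- 1%:C) ^+ (size nu - size mu) * z ^- (size mu + size nu))
       *: bmon R n nu =
  z^-1 ^+ 2 ^+ size mu *: (Gpoly mu).[(- z^-1)%:MP].
Proof.
rewrite horner_sum scaler_sumr; apply: eq_big => // nu le_mu_nu.
rewrite hornerCM hornerXn -rmorphXn [in RHS]mulrC mul_mpolyC !scalerA; congr (_ *: _).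
set k := (size nu - size mu)%N; have -> : size nu = (size mu + k)%N by rewrite subnKC.
rewrite rmorph1 -exprVn [(- z^-1) ^+ k]exprNn !exprD -exprM mulnC exprM.
by set a := z^-1; ring.
Qed.

Lemma Fpoly_eq_Gpoly mu : is_t_family t -> is_partition n mu -> Fpoly R n mu = Gpoly mu.
Proof.
move=> t_family mu_part.
have [_ mu_pos /eqP sum_mu] := and3P mu_part.
have mu_part' : is_partition (sumn mu) mu by rewrite sum_mu.
have Im_i : 0 < complex.Im ('i : R[i]) by rewrite /= ltr01.
pose L (j : nat) : R[i] := 1%:C * 'i + (j%:R : R)%:C.
have L_neq0 j : L j != 0.
  apply/eqP => /(congr1 (@complex.Im R)) /=.
  by rewrite mulr1 mulr0 !addr0 => /eqP; rewrite oner_eq0.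
apply: (@poly_eq_inj_eval _ (fun j => (- (L j)^-1)%:MP)) => [j j'|j].
  move=> /(can_inj (@mpolyCK _ _)) /oppr_inj /invr_inj /(congr1 (@complex.Re R)) /=.
  by rewrite !(mul1r, mul0r, add0r, subr0) => /addrI /eqP; rewrite eqr_nat => /eqP.
have det1 : 0 * j%:R - (-1) * 1 = 1 :> R by rewrite mul0r mulr1 sub0r opprK.
have := t_family mu mu_part' 0 (-1) 1 j%:R det1 'i Im_i.
rewrite sum_mu pi_bmon_inversion // t_expansion_eval; apply: scalerI.
by rewrite !expf_neq0 // invr_eq0; apply: L_neq0.
Qed.

End GeneratingPolynomial.

Lemma sum_mul_eqb (S : pzSemiRingType) (T : eqType) (s : seq T) (P : pred T)
    (f : T -> S) x :
  \sum_(y <- s | P y) f y * (y == x)%:R = (count_mem x s)%:R * f x *+ P x.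
Proof.
elim: s => [|y s IH]; first by rewrite big_nil mul0r mul0rn.
rewrite big_cons IH /=; case: (eqVneq y x) => [->|y_neq_x].
  by case: (P x); rewrite ?mulr1 ?mulr1n ?natrD ?mulrDl ?mul1r ?add0r ?addr0.
by case: (P y); rewrite /= ?mulr0 ?add0r ?add0n.
Qed.

Section Recursion.
Variables (R : realType) (n : nat) (t : seq nat -> seq nat -> R[i]).
Hypothesis t_family : is_t_family t.

Lemma coef_Gpoly mu j : (Gpoly n t mu)`_j =
  \sum_(nu <- partitions n | (size nu == size mu + j)%N) t mu nu *: bmon R n nu.
Proof.
rewrite coef_sum big_mkcond [RHS]big_mkcond; apply: eq_bigr => nu _.
rewrite coefCM coefXn; case: leqP => [le_mu_nu|lt_nu_mu].
  rewrite -(subnKC le_mu_nu) addKn eqn_add2l.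
  by rewrite [j == _]eq_sym; case: (_ == j); rewrite /= ?mulr1 ?mulr0.
by rewrite ifF //; apply/eqP; lia.
Qed.

Lemma mcoeff_Gpoly mu nu j : is_partition n nu ->
  (Gpoly n t mu)`_j@_(bmnm n nu) =
  (count_mem nu (partitions n))%:R * t mu nu *+ (size nu == size mu + j)%N.
Proof.
move=> nu_part; rewrite coef_Gpoly raddf_sum big_seq_cond.
rewrite (eq_bigr (fun y => t mu y * (y == nu)%:R)); last first.
  move=> y /andP[y_part _]; rewrite /= mcoeffZ bmonE mcoeffX; congr (_ * _%:R).
  congr (nat_of_bool _); apply/idP/idP => [/eqP eq_mnm | /eqP -> //]; apply/eqP.
  rewrite mem_partitions in y_part.
  apply: (bmnm_inj _ _ (partition_leq y_part) (partition_leq nu_part) eq_mnm).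
  - by case/and3P: y_part.
  - by case/and3P: nu_part.
by rewrite -big_seq_cond (sum_mul_eqb _ (fun y => size y == size mu + j)%N).
Qed.

Lemma deriv_Fpoly mu : is_partition n mu ->
  (Fpoly R n mu)^`() =
  \sum_(m <- partitions n | size m == (size mu).+1) (t mu m)%:MP%:P * Gpoly n t m.
Proof.
move=> mu_part; have [_ <-] := substQ_Fpoly R (partition_leq mu_part).
rewrite (Fpoly_eq_Gpoly t_family mu_part) coef_Gpoly addn1 rmorph_sum.
rewrite big_seq_cond [RHS]big_seq_cond.
apply: eq_bigr => m /andP[]; rewrite mem_partitions => m_part _.
rewrite -mul_mpolyC rmorphM substQ_bmon ?partition_leq //.
by rewrite (Fpoly_eq_Gpoly t_family m_part) /substQ /= mmapC.
Qed.

Lemma t_recursion mu nu k : is_partition n mu -> is_partition n nu ->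
  size nu = (size mu + k.+1)%N ->
  t mu nu *+ k.+1 = \sum_(m <- partitions n | size m == (size mu).+1) t mu m * t m nu.
Proof.
move=> mu_part nu_part size_nu.
(* [partitions n] is not known to be duplicate-free: the multiplicity of [nu] occurs on both
   sides and cancels. *)
have count_neq0 : (count_mem nu (partitions n))%:R != 0 :> R[i].
  by rewrite pnatr_eq0 -lt0n -has_count has_pred1 mem_partitions.
apply: (mulfI count_neq0).
have := congr1 (fun p : {poly {mpoly R[i][n.+1]}} => p`_k@_(bmnm n nu))
  (deriv_Fpoly mu_part).
rewrite /= coef_deriv (Fpoly_eq_Gpoly t_family mu_part) raddfMn /= mcoeff_Gpoly //.
rewrite size_nu eqxx mulr1n.
rewrite -mulrnAr => ->; rewrite coef_sum raddf_sum mulr_sumr big_seq_cond [RHS]big_seq_cond.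
apply: eq_bigr => m /andP[_ /eqP size_m].
rewrite coefCM /= mcoeffCM mcoeff_Gpoly // size_nu size_m addSnnS eqxx mulr1n.
by rewrite mulrCA mulrA.
Qed.

Lemma chain_sum_eq mu nu k : is_partition n mu -> is_partition n nu ->
  size nu = (size mu + k.+1)%N ->
  chain_sum t n nu k mu = (k.+1)`!%:R * t mu nu.
Proof.
elim: k mu => [|k IH] mu mu_part nu_part size_nu /=; first by rewrite mul1r.
rewrite big_seq_cond (eq_bigr (fun m => (k.+1)`!%:R * (t mu m * t m nu))); last first.
  move=> m /andP[]; rewrite mem_partitions => m_part /eqP size_m.
  by rewrite IH ?size_m ?size_nu ?addSnnS // mulrCA.
rewrite -big_seq_cond -mulr_sumr -(t_recursion mu_part nu_part size_nu).
by rewrite -[t mu nu *+ _]mulr_natl mulrA -natrM mulnC -factS.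
Qed.

End Recursion.

Theorem lemma6p2 (R : realType) (t : seq nat -> seq nat -> R[i])
  (ht : is_t_family t) (n k : nat) (mu nu : seq nat) :
  is_partition n mu -> is_partition n nu ->
  size nu = (size mu + k)%N -> (2 <= k)%N ->
  chain_sum t n nu k.-1 mu = (k`!)%:R * t mu nu.
Proof. by case: k => [|k] // mu_part nu_part size_nu _; exact: chain_sum_eq. Qed.
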